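(* Let $X$ be a complex Banach space and $\{S_h\}\in C_b((0,1],B(X))$. Let $\lambda,\mu\in r(\{S_h\})$ and suppose there are families $\{\mathcal{R}(\lambda,S_h)\},\{\mathcal{R}(\mu,S_h)\}\in C_b((0,1],B(X))$ satisfying, for $\nu\in\{\lambda,\mu\}$, $\lim_{h\to0}\|(\nu I-S_h)\mathcal{R}(\nu,S_h)-I\|=\lim_{h\to0}\|\mathcal{R}(\nu,S_h)(\nu I-S_h)-I\|=0$, and such that $\lim_{h\to0}\|\mathcal{R}(\lambda,S_h)-\mathcal{R}(\mu,S_h)\|=0$. Then $\lambda=\mu$.
   Context: $B(X)$ is the algebra of bounded linear operators on $X$. $C_b((0,1],B(X))$ denotes the set of families $\{T_h\}_{h\in(0,1]}\subset B(X)$ with $\sup_{h}\|T_h\|<\infty$. The resolvent set of $\{S_h\}$ is $r(\{S_h\})=\{\lambda\in\mathbb{C}:\ \exists\{\mathcal{R}(\lambda,S_h)\}\in C_b((0,1],B(X))$ with $\lim_{h\to0}\|(\lambda I-S_h)\mathcal{R}(\lambda,S_h)-I\|=\lim_{h\to0}\|\mathcal{R}(\lambda,S_h)(\lambda I-S_h)-I\|=0\}$. *)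

From HB Require Import structures.
From mathcomp Require Import all_boot all_order all_algebra.
From mathcomp Require Import all_classical all_reals all_analysis.
From mathcomp Require Import complex.
Set Implicit Arguments. Unset Strict Implicit. Unset Printing Implicit Defensive.
Import Order.TTheory GRing.Theory Num.Theory.
Import numFieldNormedType.Exports.
Local Open Scope classical_set_scope.
Local Open Scope ring_scope.
Local Open Scope complex_scope.

(* Operator norm of T : X -> X (meaningful for bounded linear T):
   sup { ||T x|| : ||x|| <= 1 }, as a real number. *)
Definition opnorm (R : realType) (X : normedModType R[i]) (T : X -> X) : R :=
  sup [set complex.Re `|T x| | x in [set x : X | `|x| <= 1]].

Definition bounded_linear (R : realType) (X : normedModType R[i]) (T : X -> X) : Prop :=
  linear T /\ exists M : R, forall x : X, complex.Re `|T x| <= M * complex.Re `|x|.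

(* C_b((0,1], B(X)): families {T_h}_{h in (0,1]} in B(X) with sup_h ||T_h|| < oo.
   A family is a function R -> (X -> X); only h in (0,1] matters. *)
Definition Cb (R : realType) (X : normedModType R[i]) (T : R -> X -> X) : Prop :=
  (forall h : R, 0 < h <= 1 -> bounded_linear (T h)) /\
  exists M : R, forall h : R, 0 < h <= 1 -> opnorm (T h) <= M.

Definition opnorm_to0 (R : realType) (X : normedModType R[i]) (A : R -> X -> X) : Prop :=
  (fun h => opnorm (A h)) @ 0^'+ --> (0 : R).

Definition is_resolvent_family (R : realType) (X : normedModType R[i])
  (S : R -> X -> X) (l : R[i]) (Rl : R -> X -> X) : Prop :=
  Cb Rl /\
  opnorm_to0 (fun h x => (l *: Rl h x - S h (Rl h x)) - x) /\
  opnorm_to0 (fun h x => Rl h (l *: x - S h x) - x).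

Definition resolvent_set (R : realType) (X : normedModType R[i])
  (S : R -> X -> X) : set R[i] :=
  [set l | exists Rl : R -> X -> X, is_resolvent_family S l Rl].

From HB Require Import structures.
From mathcomp Require Import all_boot all_order all_algebra.
From mathcomp Require Import all_classical all_reals all_analysis.
From mathcomp Require Import complex.
From mathcomp Require Import ring lra.
Import Order.TTheory GRing.Theory Num.Theory.
Import numFieldNormedType.Exports.
Local Open Scope classical_set_scope.
Local Open Scope ring_scope.
Local Open Scope complex_scope.
Set Implicit Arguments. Unset Strict Implicit.

(* For a unit vector u,
     (l - m) R_m u = [(l - S) R_l u - u] - [(m - S) R_m u - u] - (l - S) (R_l - R_m) u
   and u = (m - S) R_m u - [(m - S) R_m u - u]. As h -> 0 every bracket tends to 0, so
   |l - m| ||R_m u|| -> 0 while (|m| + sup ||S||) ||R_m u|| stays at least 1 - o(1);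
   hence |l - m| = 0. *)

Lemma Re_normr_ge0 (R : realType) (z : R[i]) : 0 <= complex.Re `|z|.
Proof. by rewrite -ler0c RRe_real ?normr_real. Qed.

Section RealNorm.
Variables (R : realType) (X : normedModType R[i]).

(* The norm of a normed space over [R[i]] is [R[i]]-valued; [opnorm] uses its real part. *)
Definition rnorm (x : X) : R := complex.Re `|x|.

Lemma normr_rnorm (x : X) : `|x| = (rnorm x)%:C.
Proof. by rewrite /rnorm RRe_real // normr_real. Qed.

Lemma rnorm_ge0 (x : X) : 0 <= rnorm x.
Proof. by rewrite -ler0c -normr_rnorm. Qed.

Lemma rnorm_gt0 (x : X) : x != 0 -> 0 < rnorm x.
Proof. by move=> x0; rewrite -ltcR -normr_rnorm normr_gt0. Qed.

Lemma rnorm0 : rnorm (0 : X) = 0.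
Proof. by rewrite /rnorm normr0. Qed.

Lemma rnormN (x : X) : rnorm (- x) = rnorm x.
Proof. by rewrite /rnorm normrN. Qed.

Lemma rnormD (x y : X) : rnorm (x + y) <= rnorm x + rnorm y.
Proof. by rewrite -lecR rmorphD /= -!normr_rnorm ler_normD. Qed.

Lemma rnormB (x y : X) : rnorm (x - y) <= rnorm x + rnorm y.
Proof. by rewrite -(rnormN y) rnormD. Qed.

Lemma rnormZ (a : R[i]) (x : X) : rnorm (a *: x) = complex.Re `|a| * rnorm x.
Proof.
apply: complexI; rewrite rmorphM /= -normr_rnorm normrZ; congr (_ * _).
by rewrite RRe_real // normr_real.
Qed.

Lemma rnorm_normalize (x : X) : x != 0 -> rnorm ((rnorm x)^-1%:C *: x) = 1.
Proof.
move=> /rnorm_gt0 x0; rewrite rnormZ ger0_norm ?ler0c ?invr_ge0 ?(ltW x0) //.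
by rewrite mulVf ?gt_eqF.
Qed.

Lemma rnorm_le1 (x : X) : (`|x| <= 1) = (rnorm x <= 1).
Proof. by rewrite normr_rnorm -lecR rmorph1. Qed.

End RealNorm.

Section OperatorBounds.
Variables (R : realType) (X : normedModType R[i]).
Implicit Types (T A B : X -> X) (C : R).

Definition bounded_by T C := forall x, rnorm (T x) <= C * rnorm x.

Lemma bounded_by_id : bounded_by (fun x => x) 1.
Proof. by move=> x; rewrite mul1r. Qed.

Lemma bounded_by_sub A B a b : bounded_by A a -> bounded_by B b ->
  bounded_by (fun x => A x - B x) (a + b).
Proof. by move=> hA hB x; rewrite mulrDl (le_trans (rnormB _ _)) // lerD. Qed.

Lemma bounded_by_scale A a (l : R[i]) : bounded_by A a ->
  bounded_by (fun x => l *: A x) (complex.Re `|l| * a).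
Proof.
by move=> hA x; rewrite rnormZ -mulrA ler_wpM2l ?Re_normr_ge0.
Qed.

Lemma bounded_by_comp A B a b : 0 <= a -> bounded_by A a -> bounded_by B b ->
  bounded_by (fun x => A (B x)) (a * b).
Proof. by move=> a0 hA hB x; rewrite -mulrA (le_trans (hA _)) // ler_wpM2l. Qed.

Lemma le_opnorm T C : bounded_by T C ->
  forall x, rnorm x <= 1 -> rnorm (T x) <= opnorm T.
Proof.
move=> hT x x1; apply: ub_le_sup; last by exists x => //; rewrite -rnorm_le1 in x1.
exists `|C| => _ [y y1 <-]; move: y1; rewrite /= rnorm_le1 => y1.
apply: (le_trans (hT y)); apply: (le_trans (ler_norm _)).
by rewrite normrM (ger0_norm (rnorm_ge0 y)) ler_piMr.
Qed.

Lemma linear0 T : linear T -> T 0 = 0.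
Proof.
move=> hT; have := hT 1 0 0; rewrite !scale1r addr0 => e.
by apply: (addIr (T 0)); rewrite add0r -e.
Qed.

Lemma linearZ T : linear T -> forall a x, T (a *: x) = a *: T x.
Proof. by move=> hT a x; have := hT a x 0; rewrite !addr0 (linear0 hT) addr0. Qed.

Lemma linearB T : linear T -> forall x y, T (x - y) = T x - T y.
Proof.
move=> hT x y; have := hT (-1) y x; rewrite !scaleN1r => e.
by rewrite [x - y]addrC e addrC.
Qed.

Lemma opnorm_ge0 T : bounded_linear T -> 0 <= opnorm T.
Proof.
move=> [lT [M hM]]; have := @le_opnorm T M hM 0.
by rewrite linear0 // rnorm0; apply; apply: ler01.
Qed.

Lemma bounded_linear_opnorm T : bounded_linear T -> bounded_by T (opnorm T).
Proof.
move=> hT x; have [lT [M hM]] := hT.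
have [->|x0] := eqVneq x 0; first by rewrite linear0 // !rnorm0 mulr0.
have := @le_opnorm T M hM ((rnorm x)^-1%:C *: x).
rewrite rnorm_normalize // lexx linearZ // rnormZ => /(_ isT).
rewrite ger0_norm ?ler0c ?invr_ge0 ?rnorm_ge0 //.
by rewrite ler_pdivrMl ?rnorm_gt0 // mulrC.
Qed.

End OperatorBounds.

Arguments bounded_by_id {R X}.

Lemma subrBB (V : zmodType) (x y z : V) : (x - z) - (y - z) = x - y.
Proof. by rewrite opprB addrA subrK. Qed.

Section ResolventGap.
Variables (R : realType) (X : normedModType R[i]).

Definition resolvent_defect (S Rl : X -> X) (l : R[i]) (x : X) : X :=
  (l *: Rl x - S (Rl x)) - x.

Lemma resolvent_gap_estimate (S Rl Rm : X -> X) (s : R) (l m : R[i]) (u : X) :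
  linear S -> 0 <= s -> bounded_by S s ->
  complex.Re `|l - m| * (rnorm u - rnorm (resolvent_defect S Rm m u)) <=
  (complex.Re `|m| + s) *
    (rnorm (resolvent_defect S Rl l u) + rnorm (resolvent_defect S Rm m u)
     + (complex.Re `|l| + s) * rnorm (Rl u - Rm u)).
Proof.
move=> lS s0 hS.
set p := rnorm (resolvent_defect S Rl l u).
set q := rnorm (resolvent_defect S Rm m u).
set d := rnorm (Rl u - Rm u).
set a := rnorm (Rm u).
have u_bound : rnorm u <= (complex.Re `|m| + s) * a + q.
  have -> : u = (m *: Rm u - S (Rm u)) - resolvent_defect S Rm m u.
    by rewrite /resolvent_defect opprB addrC subrK.
  apply: (le_trans (rnormB _ _)); rewrite lerD2r mulrDl.
  by apply: (le_trans (rnormB _ _)); rewrite rnormZ lerD2l hS.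
have gap_bound : complex.Re `|l - m| * a <= p + q + (complex.Re `|l| + s) * d.
  have -> : complex.Re `|l - m| * a =
      rnorm (resolvent_defect S Rl l u - resolvent_defect S Rm m u
             - l *: (Rl u - Rm u) + S (Rl u - Rm u)).
    rewrite -rnormZ (linearB lS) scalerBl scalerBr /resolvent_defect; congr rnorm.
    move: (l *: Rm u) (m *: Rm u) (l *: Rl u) (S (Rl u)) (S (Rm u)) => x y x' z z'.
    rewrite subrBB opprB addrAC -[x' - z + _ + _]addrA [(z' - y) + _]addrC.
    by rewrite !subrKA opprB addrC subrKA.
  apply: (le_trans (rnormD _ _)); rewrite mulrDl addrA lerD ?hS //.
  apply: (le_trans (rnormB _ _)); rewrite rnormZ lerD2r.
  exact: rnormB.
have := Re_normr_ge0 (l - m); have := Re_normr_ge0 m; have := rnorm_ge0 (Rm u).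
rewrite -/a; nra.
Qed.

Lemma bounded_by_resolvent_defect (S Rl : X -> X) (l : R[i]) :
  bounded_linear S -> bounded_linear Rl ->
  bounded_by (resolvent_defect S Rl l)
    (complex.Re `|l| * opnorm Rl + opnorm S * opnorm Rl + 1).
Proof.
move=> hS hRl; have bRl := bounded_linear_opnorm hRl; rewrite /resolvent_defect.
have bSRl := bounded_by_comp (opnorm_ge0 hS) (bounded_linear_opnorm hS) bRl.
exact: (bounded_by_sub (bounded_by_sub (bounded_by_scale l bRl) bSRl) bounded_by_id).
Qed.

Lemma resolvent_gap_opnorm (S Rl Rm : X -> X) (s : R) (l m : R[i]) (u : X) :
  bounded_linear S -> bounded_linear Rl -> bounded_linear Rm ->
  opnorm S <= s -> rnorm u = 1 ->
  complex.Re `|l - m| * (1 - opnorm (resolvent_defect S Rm m)) <=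
  (complex.Re `|m| + s) *
    (opnorm (resolvent_defect S Rl l) + opnorm (resolvent_defect S Rm m)
     + (complex.Re `|l| + s) * opnorm (fun x => Rl x - Rm x)).
Proof.
move=> hS hRl hRm Ss u1.
have s0 : 0 <= s := le_trans (opnorm_ge0 hS) Ss.
have bS : bounded_by S s.
  move=> x; apply: (le_trans (bounded_linear_opnorm hS x)).
  by rewrite ler_wpM2r ?rnorm_ge0.
have u_le1 : rnorm u <= 1 by rewrite u1.
have pP := le_opnorm (bounded_by_resolvent_defect l hS hRl) u_le1.
have qQ := le_opnorm (bounded_by_resolvent_defect m hS hRm) u_le1.
have dD := le_opnorm (bounded_by_sub (bounded_linear_opnorm hRl)
                                     (bounded_linear_opnorm hRm)) u_le1.
have gap := @resolvent_gap_estimate S Rl Rm s l m u hS.1 s0 bS; rewrite u1 in gap.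
apply: le_trans (le_trans _ gap) _.
  by rewrite ler_wpM2l ?Re_normr_ge0 // lerB.
by rewrite ler_wpM2l ?addr_ge0 ?Re_normr_ge0 // !lerD // ler_wpM2l ?addr_ge0 ?Re_normr_ge0.
Qed.

End ResolventGap.

Theorem proposition19 (R : realType) (X : completeNormedModType R[i])
  (Xnontriv : exists x : X, x != 0)
  (S : R -> X -> X) (HS : Cb S) (l m : R[i])
  (hl : l \in resolvent_set S) (hm : m \in resolvent_set S)
  (Rl Rm : R -> X -> X)
  (HRl : is_resolvent_family S l Rl) (HRm : is_resolvent_family S m Rm)
  (Hdiff : opnorm_to0 (fun h x => Rl h x - Rm h x)) :
  l = m.
Proof.
have [bS [M SM]] := HS.
have [[bRl _] [HP _]] := HRl; have [[bRm _] [HQ _]] := HRm.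
have [x x0] := Xnontriv.
set c := complex.Re `|l - m|; set K := complex.Re `|m| + `|M|.
set L := complex.Re `|l| + `|M|.
set P := fun h => opnorm (resolvent_defect (S h) (Rl h) l).
set Q := fun h => opnorm (resolvent_defect (S h) (Rm h) m).
set D := fun h => opnorm (fun x => Rl h x - Rm h x).
have gap : \forall h \near 0^'+, c <= K * (P h + Q h + L * D h) + c * Q h.
  near=> h.
  have h01 : 0 < h <= 1.
    by apply/andP; split; near: h; [exact: nbhs_right_gt | exact: nbhs_right_le].
  have := resolvent_gap_opnorm l m (bS h h01) (bRl h h01) (bRm h h01)
    (le_trans (SM h h01) (ler_norm M)) (rnorm_normalize x0).
  by rewrite /P /Q /D -/c -/K -/L; lra.
have gap0 : (fun h => K * (P h + Q h + L * D h) + c * Q h) @ 0^'+ --> 0.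
  have HP0 : P @ 0^'+ --> 0 := HP.
  have HQ0 : Q @ 0^'+ --> 0 := HQ.
  have HD0 : D @ 0^'+ --> 0 := Hdiff.
  suff : (fun h => K * (P h + Q h + L * D h) + c * Q h) @ 0^'+ -->
         K * (0 + 0 + L * 0) + c * 0 by rewrite !(mulr0, addr0).
  exact: cvgD (cvgM (cvg_cst _) (cvgD (cvgD HP0 HQ0) (cvgM (cvg_cst _) HD0)))
    (cvgM (cvg_cst _) HQ0).
have c0 : c <= 0 by exact: cvgr_to_ge gap0 gap.
apply/eqP; rewrite -subr_eq0; apply: contraTT c0 => lm.
by rewrite -ltNge; apply: (@rnorm_gt0 _ R[i]^o).
Unshelve. all: by end_near.
Qed.
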